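(* The (multi-valued) Kasner map realizes chaos for all $v\in (0,1/2)$.
   Context: Fix a parameter $v\in(0,1/2)$. Let $\mathrm{K}^{\circ}$ denote the Kasner circle $\{(\Sigma_+,\Sigma_-)\,:\,\Sigma_+^2+\Sigma_-^2=1\}$, parametrized by the angle $\varphi$ via $(\Sigma_+,\Sigma_-)=(\cos\varphi,\sin\varphi)$. Let $A_1:=\{\Sigma_+\ge v\}\cap \mathrm{K}^{\circ}$, i.e. $\varphi\in[-\arccos v,\arccos v]$, and let $A_2,A_3$ be its images under rotation by $\pm 2\pi/3$ (namely $A_2=\{-(\Sigma_++\sqrt3\Sigma_-)/2\ge v\}$, $A_3=\{-(\Sigma_+-\sqrt3\Sigma_-)/2\ge v\}$). On $A_1$ define $\mathcal{K}_1(\varphi):=\pi-2\arctan\big(\tfrac{1+v}{1-v}\tan(\varphi/2)\big)$ (the map sending the $\alpha$-limit to the $\omega$-limit of Bianchi type II heteroclinic orbits with $N_1\neq0$), and let $\mathcal{K}_2,\mathcal{K}_3$ on $A_2,A_3$ be the maps obtained from $\mathcal{K}_1$ by the same rotations. Set $\mathbf{A}:=(A_1\cap A_2)\cup(A_2\cap A_3)\cup(A_1\cap A_3)$; for $v<1/2$ these overlaps have positive length. For $\mu\in\{1,2\},\nu\in\{2,3\},\zeta\in\{1,3\}$ define $\mathcal{K}_{\mu\nu\zeta}:\mathrm{K}^{\circ}\to\mathrm{K}^{\circ}$ by $\mathcal{K}_{\mu\nu\zeta}(p)=\mathcal{K}_\alpha(p)$ if $p\in A_\alpha\setminus\mathbf{A}$,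 $=\mathcal{K}_\mu(p)$ if $p\in A_1\cap A_2$, $=\mathcal{K}_\nu(p)$ if $p\in A_2\cap A_3$, $=\mathcal{K}_\zeta(p)$ if $p\in A_1\cap A_3$. Let $\Sigma$ be the space of sequences $\omega=(\mu_n,\nu_n,\zeta_n)_{n\ge1}$ with $\mu_n\in\{1,2\},\nu_n\in\{2,3\},\zeta_n\in\{1,3\}$, and for $\omega=(\omega_n)$ set $\mathcal{K}^n_\omega:=\mathcal{K}_{\omega_n}\circ\cdots\circ\mathcal{K}_{\omega_1}$, $\mathcal{K}^0_\omega=\mathrm{Id}$. The (multi-valued) Kasner map is the skew product $(\omega,p)\mapsto(\sigma(\omega),\mathcal{K}_{\omega_1}(p))$ with $\sigma$ the shift. It realizes chaos if: (i) (sensitivity) there is $\delta>0$ such that for every $p\in\mathrm{K}^{\circ}$ and every neighborhood $U$ of $p$ there are $q\in U\setminus\{p\}$, $n\in\mathbb{N}_0$, $\omega,\omega^*\in\Sigma$ with $d(\mathcal{K}^n_\omega(p),\mathcal{K}^n_{\omega^*}(q))\ge\delta$; (ii) (topological transitivity) for any open $U,V\subset\mathrm{K}^{\circ}$ there are $n\in\mathbb{N}$, $\omega\in\Sigma$ with $\mathcal{K}^n_\omega(U)\cap V\neq\emptyset$; (iii) (dense periodic orbits) for every $p\in\mathrm{K}^{\circ}$ and every neighborhood $U$ of $p$ there are $\omega\in\Sigma$, $q\in U$, $n\in\mathbb{N}$ with $\mathcal{K}^n_\omega(q)=q$. *)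

From Stdlib Require Import Reals.
Open Scope R_scope.

(* Points of the Kasner circle are represented by an angle phi : R, standing for
   (Sigma_+, Sigma_-) = (cos phi, sin phi).  All definitions below are
   2*PI-periodic in phi, so they are well defined on the circle. *)

Definition Splus (phi : R) : R := cos phi.
Definition Sminus (phi : R) : R := sin phi.

Definition dK (phi psi : R) : R :=
  sqrt ((Splus phi - Splus psi)^2 + (Sminus phi - Sminus psi)^2).

Definition inA1 (v phi : R) : Prop := v <= Splus phi.
Definition inA2 (v phi : R) : Prop := v <= - (Splus phi + sqrt 3 * Sminus phi) / 2.
Definition inA3 (v phi : R) : Prop := v <= - (Splus phi - sqrt 3 * Sminus phi) / 2.

(* K_1 on A_1, and its rotated copies K_2 on A_2, K_3 on A_3
   (A_2 = A_1 rotated by -2PI/3, A_3 = A_1 rotated by +2PI/3). *)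
Definition K1 (v phi : R) : R :=
  PI - 2 * atan ((1 + v) / (1 - v) * tan (phi / 2)).
Definition K2 (v phi : R) : R := K1 v (phi + 2 * PI / 3) - 2 * PI / 3.
Definition K3 (v phi : R) : R := K1 v (phi - 2 * PI / 3) + 2 * PI / 3.

(* A symbol (mu, nu, zeta) with mu in {1,2}, nu in {2,3}, zeta in {1,3},
   encoded by three booleans:
     mu   = 1 if true, 2 if false;
     nu   = 2 if true, 3 if false;
     zeta = 1 if true, 3 if false. *)
Definition symbol : Type := (bool * bool * bool)%type.

Definition Kmu (v : R) (b : bool) : R -> R := if b then K1 v else K2 v.
Definition Knu (v : R) (b : bool) : R -> R := if b then K2 v else K3 v.
Definition Kzeta (v : R) (b : bool) : R -> R := if b then K1 v else K3 v.


(* K_{mu nu zeta}.  The three overlaps are pairwise disjoint (no triple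
   intersection) and A_1 u A_2 u A_3 is the whole circle for v < 1/2. *)
Definition Kmap (v : R) (s : symbol) (phi : R) : R :=
  let '(mu, nu, zeta) := s in
  if Rle_dec v (Splus phi) then
    if Rle_dec v (- (Splus phi + sqrt 3 * Sminus phi) / 2) then Kmu v mu phi
    else if Rle_dec v (- (Splus phi - sqrt 3 * Sminus phi) / 2) then Kzeta v zeta phi
    else K1 v phi
  else if Rle_dec v (- (Splus phi + sqrt 3 * Sminus phi) / 2) then
    if Rle_dec v (- (Splus phi - sqrt 3 * Sminus phi) / 2) then Knu v nu phi
    else K2 v phi
  else K3 v phi.

(* Sequences omega = (omega_1, omega_2, ...) are encoded as omega : nat -> symbol
   with omega k = omega_{k+1}.
   Kiter v omega n = K_{omega_n} o ... o K_{omega_1},  Kiter v omega 0 = Id. *)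
Fixpoint Kiter (v : R) (omega : nat -> symbol) (n : nat) (phi : R) : R :=
  match n with
  | O => phi
  | S m => Kmap v (omega m) (Kiter v omega m phi)
  end.

(* (i) sensitive dependence. Neighborhoods of p are unfolded as metric balls. *)
Definition sensitive (v : R) : Prop :=
  exists delta : R, 0 < delta /\
    forall (p eps : R), 0 < eps ->
      exists (q : R) (n : nat) (omega omega' : nat -> symbol),
        dK q p < eps /\ 0 < dK q p /\
        delta <= dK (Kiter v omega n p) (Kiter v omega' n q).

(* (ii) topological transitivity, for nonempty open U, V (unfolded to balls). *)
Definition top_transitive (v : R) : Prop :=
  forall (p1 p2 eps1 eps2 : R), 0 < eps1 -> 0 < eps2 ->
    exists (n : nat) (omega : nat -> symbol) (q : R),
      (1 <= n)%nat /\ dK q p1 < eps1 /\ dK (Kiter v omega n q) p2 < eps2.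

(* (iii) dense periodic orbits; equality on the circle = distance zero. *)
Definition dense_periodic (v : R) : Prop :=
  forall (p eps : R), 0 < eps ->
    exists (omega : nat -> symbol) (q : R) (n : nat),
      (1 <= n)%nat /\ dK q p < eps /\ dK (Kiter v omega n q) q = 0.

Definition realizes_chaos (v : R) : Prop :=
  sensitive v /\ top_transitive v /\ dense_periodic v.

From Stdlib Require Import Reals Lra Lia ZArith.
From Coquelicot Require Import Coquelicot.
Open Scope R_scope.

(* Measured by the angle phi, the arcs A_1, A_3, A_2 are the arcs of half-width
   alpha = acos v about the centres 0, 2 PI/3, 4 PI/3, and on each of them the Kasner map is
   a decreasing branch onto the complementary arc.  In the variable tan (phi/2) it is
   multiplication by (1+v)/(1-v), which makes every branch expanding, and uniformly
   expanding away from the ends of its arc.  Since v < 1/2, alpha > PI/3, so neighbouring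
   arcs overlap, and on an overlap both branches are admissible.
   (i) Applying branches to a small interval, its image grows by a fixed factor until it
   covers a whole overlap, an arc of length 2 alpha - 2 PI/3.
   (ii) Conversely, images of an overlap accumulate at every point of the circle: the set
   of such accumulation points contains the overlap and, by expansion, each branch
   enlarges it by a definite amount.
   Sensitivity follows from (i), since the two ends of an overlap are far apart;
   transitivity from (i) and (ii); and a periodic point near any point comes from (i) and
   (ii) together with the intermediate value theorem, applied to a composition of branches
   mapping a small interval monotonically over itself. *)

Lemma IVT_between (f : R -> R) (x y c : R) :
  x <= y -> (forall z, x <= z <= y -> continuity_pt f z) ->
  f x <= c <= f y \/ f y <= c <= f x -> exists z, x <= z <= y /\ f z = c.
Proof.
  intros Hxy Hf Hc.
  destruct (Req_dec (f x) c) as [Ex|Ex]; [exists x; split; [lra|exact Ex]|].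
  destruct (Req_dec (f y) c) as [Ey|Ey]; [exists y; split; [lra|exact Ey]|].
  assert (Hlt : x < y) by (destruct (Req_dec x y) as [->|]; lra).
  destruct Hc as [Hc|Hc].
  - destruct (Ranalysis5.IVT_interv (fun z => f z - c) x y) as [z [Hz Ez]];
      [intros a Ha; apply continuity_pt_minus; [auto|apply continuity_pt_const; now intros ? ?]
      |exact Hlt|lra|lra|].
    exists z. split; [exact Hz|lra].
  - destruct (Ranalysis5.IVT_interv (fun z => c - f z) x y) as [z [Hz Ez]];
      [intros a Ha; apply continuity_pt_minus; [apply continuity_pt_const; now intros ? ?|auto]
      |exact Hlt|lra|lra|].
    exists z. split; [exact Hz|lra].
Qed.

Lemma continuity_pt_ball (f : R -> R) (x eps : R) : continuity_pt f x -> 0 < eps ->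
  exists eta, 0 < eta /\ forall y, Rabs (y - x) < eta -> Rabs (f y - f x) < eps.
Proof.
  intros Hf Heps. destruct (Hf eps Heps) as [eta [Heta Hball]].
  exists eta. split; [exact Heta|]. intros y Hy.
  destruct (Req_dec y x) as [->|Hne].
  - rewrite Rminus_diag, Rabs_R0. exact Heps.
  - apply Hball. split; [split; [exact I|auto]|exact Hy].
Qed.

Lemma Int_part_interval (x d : R) : 0 < d -> exists k : Z, IZR k * d <= x < IZR k * d + d.
Proof.
  intros Hd. destruct (base_Int_part (x / d)) as [H1 H2].
  exists (Int_part (x / d)).
  assert (E : x = x / d * d) by (field; lra).
  set (t := x / d) in *. set (k := IZR (Int_part t)) in *. rewrite E. split; nra.
Qed.

Lemma periodic_Z (f : R -> R) (p : R) : (forall x, f (x + p) = f x) ->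
  forall (k : Z) x, f (x + IZR k * p) = f x.
Proof.
  intros Hp k. induction k as [|k IH|k IH] using Z.peano_ind; intros x.
  - now rewrite Rmult_0_l, Rplus_0_r.
  - rewrite succ_IZR, <- (IH x), <- (Hp (x + IZR k * p)). f_equal. ring.
  - rewrite <- (IH x), <- (Hp (x + IZR (Z.pred k) * p)). f_equal.
    unfold Z.pred. rewrite plus_IZR. ring.
Qed.

Lemma cos_period_Z (x : R) (k : Z) : cos (x + 2 * PI * IZR k) = cos x.
Proof.
  replace (x + 2 * PI * IZR k) with (x + IZR k * (2 * PI)) by ring.
  apply periodic_Z. intros y. rewrite <- (cos_period y 1). f_equal. simpl. ring.
Qed.

Lemma sin_period_Z (x : R) (k : Z) : sin (x + 2 * PI * IZR k) = sin x.
Proof.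
  replace (x + 2 * PI * IZR k) with (x + IZR k * (2 * PI)) by ring.
  apply periodic_Z. intros y. rewrite <- (sin_period y 1). f_equal. simpl. ring.
Qed.

Lemma tan_period_Z (x : R) (k : Z) : tan (x + IZR k * PI) = tan x.
Proof.
  apply periodic_Z. intros y. unfold tan. rewrite neg_sin, neg_cos, Rdiv_opp_l, Rdiv_opp_r. ring.
Qed.

Lemma tan_half_sq (x : R) : cos (x / 2) <> 0 -> tan (x / 2) ^ 2 = (1 - cos x) / (1 + cos x).
Proof.
  intros Hc. replace x with (2 * (x / 2)) at 2 3 by field.
  rewrite cos_2a_cos. unfold tan.
  assert (Hs : sin (x / 2) ^ 2 = 1 - cos (x / 2) ^ 2).
  { generalize (sin2_cos2 (x / 2)). unfold Rsqr. lra. }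
  replace ((sin (x / 2) / cos (x / 2)) ^ 2) with (sin (x / 2) ^ 2 / cos (x / 2) ^ 2) by (field; auto).
  rewrite Hs. field. split; [|exact Hc]. intro H. apply Hc. nra.
Qed.

Lemma atan_tan_half (x : R) : -PI < x < PI -> 2 * atan (tan (x / 2)) = x.
Proof. intros Hx. rewrite atan_tan; [field|lra]. Qed.

Lemma tan_half_le (x y : R) : -PI < x -> x <= y -> y < PI -> tan (x / 2) <= tan (y / 2).
Proof.
  intros Hx Hxy Hy. destruct (Req_dec x y) as [->|Hne]; [lra|].
  left. apply tan_increasing; lra.
Qed.

Lemma atan_scale_expand (k S lam s1 s2 : R) : 0 < S -> lam <= k ->
  lam * (1 + k ^ 2 * S ^ 2) <= k * (1 + S ^ 2) ->
  -S <= s1 -> s1 <= s2 -> s2 <= S ->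
  lam * (atan s2 - atan s1) <= atan (k * s2) - atan (k * s1).
Proof.
  intros HS Hlk Hlam H1 H12 H2.
  destruct (Req_dec s1 s2) as [->|Hne]; [lra|].
  set (g := fun s => atan (k * s) - lam * atan s).
  assert (Hd : forall c, s1 <= c <= s2 ->
    derivable_pt_lim g c (k / (1 + (k * c) ^ 2) - lam / (1 + c ^ 2))).
  { intros c Hc. apply is_derive_Reals. unfold g. auto_derive; auto. field. split; nra. }
  destruct (MVT_cor2 g _ s1 s2 ltac:(lra) Hd) as [c [Hmvt Hc]].
  (* the numerator of g' is affine in c^2 and nonnegative at c^2 = 0 and at c^2 = S^2 *)
  assert (Hnum : 0 <= k * (1 + c ^ 2) - lam * (1 + (k * c) ^ 2)).
  { assert (Hc2 : c ^ 2 <= S ^ 2) by nra.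
    assert (0 <= (S ^ 2 - c ^ 2) * (k - lam)) by (apply Rmult_le_pos; lra).
    assert (0 <= c ^ 2 * (k * (1 + S ^ 2) - lam * (1 + k ^ 2 * S ^ 2))) by (apply Rmult_le_pos; nra).
    assert (E : S ^ 2 * (k * (1 + c ^ 2) - lam * (1 + (k * c) ^ 2)) =
            (S ^ 2 - c ^ 2) * (k - lam) + c ^ 2 * (k * (1 + S ^ 2) - lam * (1 + k ^ 2 * S ^ 2))) by ring.
    apply (Rmult_le_reg_l (S ^ 2)); [nra|]. rewrite Rmult_0_r, E. lra. }
  assert (Hg' : 0 <= k / (1 + (k * c) ^ 2) - lam / (1 + c ^ 2)).
  { replace (k / (1 + (k * c) ^ 2) - lam / (1 + c ^ 2)) with
      ((k * (1 + c ^ 2) - lam * (1 + (k * c) ^ 2)) / ((1 + (k * c) ^ 2) * (1 + c ^ 2))) by (field; nra).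
    apply Rdiv_le_0_compat; nra. }
  unfold g in Hmvt. nra.
Qed.

Section K1_analysis.

Variable v : R.
Hypothesis Hv : 0 < v < 1.

Lemma K1_continuous (x : R) : -PI < x < PI -> continuity_pt (K1 v) x.
Proof.
  intros Hx. apply continuity_pt_filterlim, (ex_derive_continuous (K1 v)).
  unfold K1. auto_derive. apply ex_derive_Reals_1, derivable_pt_tan. lra.
Qed.

Lemma K1_opp (x : R) : K1 v (- x) = 2 * PI - K1 v x.
Proof.
  unfold K1. replace (- x / 2) with (- (x / 2)) by field.
  rewrite tan_neg, <- Ropp_mult_distr_r, atan_opp. ring.
Qed.

Lemma K1_period (x : R) (k : Z) : K1 v (x + 2 * PI * IZR k) = K1 v x.
Proof.
  unfold K1. replace ((x + 2 * PI * IZR k) / 2) with (x / 2 + IZR k * PI) by field.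
  now rewrite tan_period_Z.
Qed.

Definition kappa : R := (1 + v) / (1 - v).

Lemma kappa_gt1 : 1 < kappa.
Proof. unfold kappa. apply (Rmult_lt_reg_r (1 - v)); [lra|]. field_simplify; lra. Qed.

Lemma K1_decreasing (x y : R) : -PI < x -> x < y -> y < PI -> K1 v y < K1 v x.
Proof.
  intros Hx Hxy Hy. unfold K1. fold kappa.
  assert (tan (x / 2) < tan (y / 2)) by (apply tan_increasing; lra).
  assert (atan (kappa * tan (x / 2)) < atan (kappa * tan (y / 2))).
  { apply atan_increasing. generalize kappa_gt1. nra. }
  lra.
Qed.

Definition alpha : R := acos v.

Lemma cos_alpha : cos alpha = v.
Proof. apply cos_acos. lra. Qed.

Lemma alpha_bounds : 0 < alpha < PI / 2.
Proof.
  generalize (acos_bound v) cos_alpha PI_RGT_0. fold alpha. intros [H0 H1] Hc HPI.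
  split.
  - destruct (Req_dec alpha 0) as [E|]; [rewrite E, cos_0 in Hc; lra|lra].
  - destruct (Rlt_le_dec alpha (PI / 2)) as [|Hle]; [assumption|].
    destruct (Req_dec alpha (PI / 2)) as [E|]; [rewrite E, cos_PI2 in Hc; lra|].
    assert (cos alpha < cos (PI / 2)) by (apply cos_decreasing_1; lra).
    rewrite cos_PI2 in *. lra.
Qed.

Lemma tan_half_alpha : 0 < tan (alpha / 2) /\ kappa * tan (alpha / 2) ^ 2 = 1.
Proof.
  generalize alpha_bounds PI_RGT_0. intros Ha HPI.
  assert (Hc : 0 < cos (alpha / 2)) by (apply cos_gt_0; lra).
  split.
  - apply Rdiv_lt_0_compat; [apply sin_gt_0; lra|exact Hc].
  - rewrite tan_half_sq by lra. rewrite cos_alpha. unfold kappa. field. lra.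
Qed.

Lemma K1_alpha : K1 v alpha = alpha.
Proof.
  destruct tan_half_alpha as [HT HT2]. generalize alpha_bounds PI_RGT_0; intros Ha HPI.
  unfold K1. fold kappa.
  (* tan (alpha/2)^2 = 1/kappa turns atan (kappa * tan (alpha/2)) into atan (/ tan (alpha/2)) *)
  replace (kappa * tan (alpha / 2)) with (/ tan (alpha / 2))
    by (field_simplify_eq; [nra|lra]).
  rewrite atan_inv, atan_tan by lra. field.
Qed.

Lemma K1_opp_alpha : K1 v (- alpha) = 2 * PI - alpha.
Proof. rewrite K1_opp, K1_alpha. ring. Qed.

Lemma K1_expand (S lam x y : R) : 0 < S -> lam <= kappa ->
  lam * (1 + kappa ^ 2 * S ^ 2) <= kappa * (1 + S ^ 2) ->
  -PI < x -> x <= y -> y < PI -> -S <= tan (x / 2) -> tan (y / 2) <= S ->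
  lam * (y - x) <= K1 v x - K1 v y.
Proof.
  intros HS Hlk Hlam Hx Hxy Hy Htx Hty.
  rewrite <- (atan_tan_half x) at 1 by lra. rewrite <- (atan_tan_half y) at 1 by lra.
  unfold K1. fold kappa.
  assert (lam * (atan (tan (y / 2)) - atan (tan (x / 2))) <=
          atan (kappa * tan (y / 2)) - atan (kappa * tan (x / 2))).
  { apply (atan_scale_expand _ S); auto. apply tan_half_le; lra. }
  lra.
Qed.

Lemma tan_half_bounds (c x : R) : 0 < c < PI -> -c <= x <= c ->
  - tan (c / 2) <= tan (x / 2) <= tan (c / 2).
Proof.
  intros Hc Hx. rewrite <- tan_neg. replace (- (c / 2)) with (- c / 2) by field.
  split; apply tan_half_le; lra.
Qed.

Lemma K1_expanding (x y : R) : -alpha <= x -> x <= y -> y <= alpha -> y - x <= K1 v x - K1 v y.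
Proof.
  intros Hx Hxy Hy. destruct tan_half_alpha as [HT HT2].
  generalize alpha_bounds PI_RGT_0 kappa_gt1; intros Ha HPI Hk.
  destruct (tan_half_bounds alpha x) as [Hx1 _]; [lra|lra|].
  destruct (tan_half_bounds alpha y) as [_ Hy2]; [lra|lra|].
  rewrite <- (Rmult_1_l (y - x)).
  apply (K1_expand (tan (alpha / 2))); try lra. nra.
Qed.

Lemma K1_uniformly_expanding (c : R) : 0 < c < alpha -> exists lam, 1 < lam /\
  forall x y, -c <= x -> x <= y -> y <= c -> lam * (y - x) <= K1 v x - K1 v y.
Proof.
  intros Hc. destruct tan_half_alpha as [HT HT2].
  generalize alpha_bounds PI_RGT_0 kappa_gt1; intros Ha HPI Hk.
  set (S := tan (c / 2)).
  assert (HS : 0 < S) by (apply Rdiv_lt_0_compat; [apply sin_gt_0|apply cos_gt_0]; lra).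
  assert (HST : S < tan (alpha / 2)) by (apply tan_increasing; lra).
  assert (HkS : kappa * S ^ 2 < 1) by nra.
  exists (kappa * (1 + S ^ 2) / (1 + kappa ^ 2 * S ^ 2)). split.
  - apply (Rmult_lt_reg_r (1 + kappa ^ 2 * S ^ 2)); [nra|].
    field_simplify; [|nra].
    assert (0 < (kappa - 1) * (1 - kappa * S ^ 2)) by (apply Rmult_lt_0_compat; lra). nra.
  - intros x y Hx Hxy Hy.
    destruct (tan_half_bounds c x) as [Hx1 _]; [lra|lra|].
    destruct (tan_half_bounds c y) as [_ Hy2]; [lra|lra|].
    apply (K1_expand S); try lra.
    + apply (Rmult_le_reg_r (1 + kappa ^ 2 * S ^ 2)); [nra|].
      field_simplify; [|nra].
      assert (0 <= kappa * S ^ 2 * (kappa ^ 2 - 1)) by (apply Rmult_le_pos; nra). nra.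
    + right. field. nra.
    + exact Hx1.
    + exact Hy2.
Qed.

Lemma K1_gain (c lam x u w y : R) :
  (forall s t, -c <= s -> s <= t -> t <= c -> lam * (t - s) <= K1 v s - K1 v t) ->
  -alpha <= x -> x <= u -> u <= w -> w <= y -> y <= alpha -> -c <= u -> w <= c ->
  (y - x) + (lam - 1) * (w - u) <= K1 v x - K1 v y.
Proof.
  intros Hexp Hx Hxu Huw Hwy Hy Hu Hw.
  assert (u - x <= K1 v x - K1 v u) by (apply K1_expanding; lra).
  assert (lam * (w - u) <= K1 v u - K1 v w) by (apply Hexp; lra).
  assert (y - w <= K1 v w - K1 v y) by (apply K1_expanding; lra).
  lra.
Qed.

End K1_analysis.

Definition monotone_onto (F : R -> R) (x y lo hi : R) : Prop :=
  (F x = lo /\ F y = hi /\ forall z1 z2, x <= z1 -> z1 <= z2 -> z2 <= y -> F z1 <= F z2) \/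
  (F x = hi /\ F y = lo /\ forall z1 z2, x <= z1 -> z1 <= z2 -> z2 <= y -> F z2 <= F z1).

Lemma monotone_onto_range (F : R -> R) (x y lo hi z : R) :
  monotone_onto F x y lo hi -> x <= z <= y -> lo <= F z <= hi.
Proof.
  intros [[Ex [Ey Hm]]|[Ex [Ey Hm]]] Hz; subst lo hi; split; apply Hm; lra.
Qed.

Lemma monotone_onto_comp (F G : R -> R) (x y lo hi lo' hi' : R) :
  monotone_onto F x y lo hi -> monotone_onto G lo hi lo' hi' ->
  monotone_onto (fun z => G (F z)) x y lo' hi'.
Proof.
  intros HF HG.
  assert (Hr : forall z1 z2, x <= z1 -> z1 <= z2 -> z2 <= y -> lo <= F z1 <= hi /\ lo <= F z2 <= hi)
    by (intros; split; apply (monotone_onto_range F x y); auto; lra).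
  destruct HF as [[Fx [Fy HF]]|[Fx [Fy HF]]], HG as [[Glo [Ghi HG]]|[Glo [Ghi HG]]];
    [left|right|right|left]; rewrite Fx, Fy; repeat split; auto;
    intros z1 z2 H1 H12 H2; destruct (Hr z1 z2 H1 H12 H2); apply HG; try lra; apply HF; lra.
Qed.

Lemma monotone_onto_restrict (F : R -> R) (x y lo hi z1 z2 : R) :
  monotone_onto F x y lo hi -> x <= z1 <= y -> x <= z2 <= y -> F z1 < F z2 ->
  exists x' y', x <= x' /\ x' < y' /\ y' <= y /\ monotone_onto F x' y' (F z1) (F z2).
Proof.
  intros [[_ [_ Hm]]|[_ [_ Hm]]] Hz1 Hz2 Hlt.
  - assert (z1 < z2) by (destruct (Rlt_le_dec z1 z2); [assumption|]; specialize (Hm z2 z1); lra).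
    exists z1, z2. repeat split; try lra. left. repeat split. intros; apply Hm; lra.
  - assert (z2 < z1) by (destruct (Rlt_le_dec z2 z1); [assumption|]; specialize (Hm z1 z2); lra).
    exists z2, z1. repeat split; try lra. right. repeat split. intros; apply Hm; lra.
Qed.

Lemma monotone_onto_shift (F : R -> R) (x y lo hi c : R) :
  monotone_onto F x y lo hi -> monotone_onto (fun z => F z + c) x y (lo + c) (hi + c).
Proof.
  intros [[Fx [Fy Hm]]|[Fx [Fy Hm]]]; [left|right]; rewrite Fx, Fy; repeat split;
    intros z1 z2 H1 H12 H2; specialize (Hm z1 z2 H1 H12 H2); lra.
Qed.

Lemma monotone_onto_fixed_point (F : R -> R) (x y lo hi : R) :
  x <= y -> (forall z, x <= z <= y -> continuity_pt F z) ->
  monotone_onto F x y lo hi -> lo <= x -> y <= hi -> exists u, x <= u <= y /\ F u = u.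
Proof.
  intros Hxy Hc HF Hlo Hhi.
  destruct (IVT_between (fun z => F z - z) x y 0 Hxy) as [u [Hu Eu]].
  - intros z Hz. apply continuity_pt_minus; [auto|apply continuity_pt_id].
  - destruct HF as [[Fx [Fy _]]|[Fx [Fy _]]]; rewrite Fx, Fy; lra.
  - exists u. split; [exact Hu|lra].
Qed.

Definition center (j : Z) : R := 2 * PI * IZR j / 3.

Lemma center_succ (j : Z) : center (j + 1) = center j + 2 * PI / 3.
Proof. unfold center. rewrite plus_IZR. field. Qed.

Lemma center_mod3 (j : Z) :
  exists r q : Z, (r = 0 \/ r = 1 \/ r = 2)%Z /\ center j = center r + 2 * PI * IZR q.
Proof.
  exists (j mod 3)%Z, (j / 3)%Z. split.
  - assert (0 <= j mod 3 < 3)%Z by (apply Z.mod_pos_bound; lia). lia.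
  - rewrite (Z.div_mod j 3) at 1 by lia. unfold center.
    rewrite plus_IZR, mult_IZR. simpl. field.
Qed.

Lemma cos_minus_center1 (x : R) : cos (x - center 1) = - (cos x - sqrt 3 * sin x) / 2.
Proof.
  unfold center. replace (2 * PI * IZR 1 / 3) with (PI - PI / 3) by (simpl; field).
  rewrite cos_minus, Rtrigo_facts.cos_pi_minus, sin_PI_x, cos_PI3, sin_PI3. field.
Qed.

Lemma cos_minus_center2 (x : R) : cos (x - center 2) = - (cos x + sqrt 3 * sin x) / 2.
Proof.
  unfold center. replace (2 * PI * IZR 2 / 3) with (PI / 3 + PI) by (simpl; field).
  rewrite cos_minus, neg_cos, neg_sin, cos_PI3, sin_PI3. field.
Qed.

Lemma Kmap_period (v : R) (s : symbol) (x : R) (k : Z) :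
  Kmap v s (x + 2 * PI * IZR k) = Kmap v s x.
Proof.
  assert (E : forall y, K1 v (x + 2 * PI * IZR k + y) = K1 v (x + y)).
  { intros y. replace (x + 2 * PI * IZR k + y) with (x + y + 2 * PI * IZR k) by ring.
    apply K1_period. }
  assert (E' : forall y, K1 v (x + 2 * PI * IZR k - y) = K1 v (x - y))
    by (intros y; unfold Rminus; apply E).
  assert (E1 : K1 v (x + 2 * PI * IZR k) = K1 v x) by apply K1_period.
  destruct s as [[mu nu] zeta].
  unfold Kmap, Splus, Sminus. rewrite cos_period_Z, sin_period_Z.
  destruct mu, nu, zeta; unfold Kmu, Knu, Kzeta, K2, K3; rewrite ?E, ?E', ?E1; reflexivity.
Qed.

Lemma dK_cos (x y : R) : dK x y = sqrt (2 - 2 * cos (x - y)).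
Proof.
  unfold dK, Splus, Sminus. f_equal. rewrite cos_minus.
  generalize (sin2_cos2 x) (sin2_cos2 y). unfold Rsqr. intros. nra.
Qed.

Lemma dK_dist_euc (x y : R) : dK x y = dist_euc (cos x) (sin x) (cos y) (sin y).
Proof. unfold dK, dist_euc, Splus, Sminus. now rewrite !Rsqr_pow2. Qed.

Lemma dK_sym (x y : R) : dK x y = dK y x.
Proof. rewrite !dK_dist_euc. apply distance_symm. Qed.

Lemma dK_triangle (x y z : R) : dK x z <= dK x y + dK y z.
Proof. rewrite !dK_dist_euc. apply triangle. Qed.

Lemma dK_refl (x : R) : dK x x = 0.
Proof. rewrite dK_cos, Rminus_diag, cos_0. replace (2 - 2 * 1) with 0 by ring. apply sqrt_0. Qed.

Lemma dK_period_l (x y : R) (k : Z) : dK (x + 2 * PI * IZR k) y = dK x y.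
Proof. unfold dK, Splus, Sminus. now rewrite cos_period_Z, sin_period_Z. Qed.

Lemma dK_period_r (x y : R) (k : Z) : dK x (y + 2 * PI * IZR k) = dK x y.
Proof. unfold dK, Splus, Sminus. now rewrite cos_period_Z, sin_period_Z. Qed.

Lemma sin_sq_le (u : R) : sin u ^ 2 <= u ^ 2.
Proof.
  assert (Hpos : forall w, 0 <= w -> sin w ^ 2 <= w ^ 2).
  { intros w Hw. destruct (Req_dec w 0) as [->|Hne]; [rewrite sin_0; lra|].
    assert (sin w < w) by (apply sin_lt_x; lra).
    assert (- w <= sin w).
    { destruct (Rle_lt_dec 1 w); [generalize (SIN_bound w); lra|].
      assert (0 < sin w) by (apply sin_gt_0; generalize PI_RGT_0 PI2_3_2; lra). lra. }
    nra. }
  destruct (Rle_lt_dec 0 u); [now apply Hpos|].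
  replace u with (- (- u)) by ring. rewrite sin_neg. specialize (Hpos (- u) ltac:(lra)). nra.
Qed.

Lemma dK_le_abs (x y : R) : dK x y <= Rabs (x - y).
Proof.
  rewrite dK_cos, <- sqrt_Rsqr_abs. apply sqrt_le_1_alt.
  replace (x - y) with (2 * ((x - y) / 2)) at 1 by field. rewrite cos_2a_sin.
  generalize (sin_sq_le ((x - y) / 2)). unfold Rsqr. nra.
Qed.

Lemma dK_pos (x y : R) : 0 < Rabs (x - y) < 2 * PI -> 0 < dK x y.
Proof.
  intros H. rewrite dK_cos. apply sqrt_lt_R0.
  replace (x - y) with (2 * ((x - y) / 2)) by field. rewrite cos_2a_sin.
  assert (Hs : sin ((x - y) / 2) <> 0).
  { destruct (Rle_lt_dec 0 (x - y)).
    - rewrite Rabs_right in H by lra.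
      assert (0 < sin ((x - y) / 2)) by (apply sin_gt_0; lra). lra.
    - rewrite Rabs_left in H by lra. replace ((x - y) / 2) with (- ((y - x) / 2)) by field.
      rewrite sin_neg. assert (0 < sin ((y - x) / 2)) by (apply sin_gt_0; lra). lra. }
  apply Rsqr_pos_lt in Hs. unfold Rsqr in Hs. lra.
Qed.

Section Kasner.

Variable v : R.
Hypothesis Hv : 0 < v < 1 / 2.

Let Hv1 : 0 < v < 1.
Proof. lra. Qed.

(* For j = 0, 1, 2 (mod 3), [branch j] is K_1, K_3, K_2 (mod 2 PI) on A_1, A_3, A_2. *)
Definition branch (j : Z) (x : R) : R := K1 v (x - center j) + center j.

Definition reach (n : nat) (z y : R) : Prop :=
  exists (omega : nat -> symbol) (k : Z), Kiter v omega n z = y + 2 * PI * IZR k.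

Lemma Kmap_branch (r : Z) (x : R) : (r = 0 \/ r = 1 \/ r = 2)%Z -> v <= cos (x - center r) ->
  exists s k, Kmap v s x = branch r x + 2 * PI * IZR k.
Proof.
  (* the three arc conditions sum to zero, so no point lies on all three arcs *)
  assert (Hsum : forall y, cos y + - (cos y + sqrt 3 * sin y) / 2 + - (cos y - sqrt 3 * sin y) / 2 = 0)
    by (intros; field).
  intros [Hr|[Hr|Hr]] Hx; subst r; unfold branch, Kmap, Kmu, Knu, Kzeta, Splus, Sminus.
  - exists (true, true, true), 0%Z. unfold center in *. simpl.
    replace (x - 2 * PI * 0 / 3) with x in * by field.
    specialize (Hsum x).
    destruct (Rle_dec v (cos x)); [|lra].
    destruct (Rle_dec v (- (cos x + sqrt 3 * sin x) / 2));
      [|destruct (Rle_dec v (- (cos x - sqrt 3 * sin x) / 2))]; field.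
  - exists (true, false, false), 0%Z. rewrite cos_minus_center1 in Hx. specialize (Hsum x).
    unfold K3, center. replace (2 * PI * IZR 1 / 3) with (2 * PI / 3) by (simpl; field).
    destruct (Rle_dec v (cos x)); destruct (Rle_dec v (- (cos x + sqrt 3 * sin x) / 2));
      try destruct (Rle_dec v (- (cos x - sqrt 3 * sin x) / 2)); simpl; ring || lra.
  - exists (false, true, true), (-1)%Z. rewrite cos_minus_center2 in Hx. specialize (Hsum x).
    unfold K2, center.
    replace (x - 2 * PI * IZR 2 / 3) with (x + 2 * PI / 3 + 2 * PI * IZR (-1)) by (simpl; field).
    rewrite K1_period.
    destruct (Rle_dec v (cos x)); destruct (Rle_dec v (- (cos x + sqrt 3 * sin x) / 2));
      try destruct (Rle_dec v (- (cos x - sqrt 3 * sin x) / 2)); simpl; field || lra.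
Qed.

Lemma reach_refl (z : R) : reach 0 z z.
Proof. exists (fun _ => (true, true, true)), 0%Z. simpl. ring. Qed.

Lemma reach_period (n : nat) (z y : R) (m : Z) : reach n z y -> reach n z (y + 2 * PI * IZR m).
Proof.
  intros [omega [k Hk]]. exists omega, (k - m)%Z. rewrite Hk, minus_IZR. ring.
Qed.

Lemma Kiter_period (omega : nat -> symbol) (n : nat) (z : R) (k : Z) :
  exists k', Kiter v omega n (z + 2 * PI * IZR k) = Kiter v omega n z + 2 * PI * IZR k'.
Proof.
  destruct n as [|n]; [exists k; reflexivity|].
  exists 0%Z. simpl. rewrite Rmult_0_r, Rplus_0_r.
  induction n as [|n IH]; simpl in *; [apply Kmap_period|now rewrite IH].
Qed.

Lemma reach_trans (n m : nat) (z y w : R) : reach n z y -> reach m y w -> reach (n + m) z w.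
Proof.
  intros [om1 [k1 H1]] [om2 [k2 H2]].
  set (om := fun i => if Nat.ltb i n then om1 i else om2 (i - n)%nat).
  assert (Hfirst : forall i, (i <= n)%nat -> Kiter v om i z = Kiter v om1 i z).
  { induction i as [|i IH]; intros Hi; [reflexivity|].
    simpl. rewrite IH by lia. unfold om.
    now replace (Nat.ltb i n) with true by (symmetry; apply Nat.ltb_lt; lia). }
  assert (Hlast : forall i, Kiter v om (n + i) z = Kiter v om2 i (Kiter v om1 n z)).
  { induction i as [|i IH]; [rewrite Nat.add_0_r; apply Hfirst; lia|].
    rewrite Nat.add_succ_r. simpl. rewrite IH. unfold om.
    replace (Nat.ltb (n + i) n) with false by (symmetry; apply Nat.ltb_ge; lia).
    now replace (n + i - n)%nat with i by lia. }
  destruct (Kiter_period om2 m y k1) as [k' Hk'].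
  exists om, (k2 + k')%Z. rewrite Hlast, H1, Hk', H2, plus_IZR. ring.
Qed.

Lemma reach_branch (j : Z) (x : R) : v <= cos (x - center j) -> reach 1 x (branch j x).
Proof.
  intros Hx. destruct (center_mod3 j) as [r [q [Hr Ej]]].
  assert (Ex : x - center j = x - center r + 2 * PI * IZR (- q)) by (rewrite Ej, opp_IZR; ring).
  rewrite Ex, cos_period_Z in Hx.
  destruct (Kmap_branch r x Hr Hx) as [s [k Hk]].
  exists (fun _ => s), (k - q)%Z. simpl. unfold branch in *.
  rewrite Hk, Ex, K1_period, Ej, minus_IZR. ring.
Qed.

Definition kbranch (n : nat) (x y lo hi : R) (F : R -> R) : Prop :=
  x < y /\ lo < hi /\ monotone_onto F x y lo hi /\
  forall z, x <= z <= y -> continuity_pt F z /\ reach n z (F z).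

Lemma kbranch_id (x y : R) : x < y -> kbranch 0 x y x y (fun z => z).
Proof.
  intros Hxy. split; [|split; [|split]]; try lra.
  - left. repeat split. intros; lra.
  - intros z _. split; [apply continuity_pt_id|apply reach_refl].
Qed.

Lemma kbranch_period (n : nat) (x y lo hi : R) (F : R -> R) (m : Z) :
  kbranch n x y lo hi F ->
  kbranch n x y (lo + 2 * PI * IZR m) (hi + 2 * PI * IZR m) (fun z => F z + 2 * PI * IZR m).
Proof.
  intros [Hxy [Hlh [Hm Hz]]]. split; [|split; [|split]]; try lra.
  - now apply monotone_onto_shift.
  - intros z Hz'. split.
    + apply continuity_pt_plus; [now apply Hz|apply continuity_pt_const; now intros ? ?].
    + now apply reach_period, Hz.
Qed.

Lemma kbranch_surj (n : nat) (x y lo hi c : R) (F : R -> R) :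
  kbranch n x y lo hi F -> lo <= c <= hi -> exists z, x <= z <= y /\ F z = c.
Proof.
  intros [Hxy [_ [Hm Hz]]] Hc. apply IVT_between; [lra|now intros; apply Hz|].
  destruct Hm as [[Fx [Fy _]]|[Fx [Fy _]]]; rewrite Fx, Fy; lra.
Qed.

Lemma kbranch_restrict (n : nat) (x y lo hi c d : R) (F : R -> R) :
  kbranch n x y lo hi F -> lo <= c -> c < d -> d <= hi ->
  exists x' y', x <= x' /\ y' <= y /\ kbranch n x' y' c d F.
Proof.
  intros HF Hc Hcd Hd.
  destruct (kbranch_surj n x y lo hi c F HF) as [z1 [Hz1 E1]]; [lra|].
  destruct (kbranch_surj n x y lo hi d F HF) as [z2 [Hz2 E2]]; [lra|].
  destruct HF as [Hxy [Hlh [Hm Hz]]].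
  destruct (monotone_onto_restrict F x y lo hi z1 z2 Hm Hz1 Hz2) as [x' [y' [H1 [H2 [H3 Hm']]]]];
    [lra|].
  exists x', y'. rewrite E1, E2 in Hm'.
  split; [|split; [|split; [|split; [|split]]]]; try lra; [exact Hm'|].
  intros z Hz'. apply Hz. lra.
Qed.

Lemma kbranch_comp (n m : nat) (x y lo hi lo' hi' : R) (F G : R -> R) :
  kbranch n x y lo hi F -> kbranch m lo hi lo' hi' G ->
  kbranch (n + m) x y lo' hi' (fun z => G (F z)).
Proof.
  intros [Hxy [Hlh [HmF HF]]] [_ [Hlh' [HmG HG]]].
  split; [|split; [|split]]; try lra.
  - now apply (monotone_onto_comp F G x y lo hi).
  - intros z Hz. assert (HFz := monotone_onto_range F x y lo hi z HmF Hz). split.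
    + apply continuity_pt_comp; [now apply HF|now apply HG].
    + apply reach_trans with (F z); [now apply HF|now apply HG].
Qed.

Lemma kbranch_fixed_point (n : nat) (x y lo hi : R) (F : R -> R) :
  kbranch n x y lo hi F -> lo <= x -> y <= hi -> exists u, x <= u <= y /\ reach n u u.
Proof.
  intros [Hxy [_ [Hm HF]]] Hlo Hhi.
  destruct (monotone_onto_fixed_point F x y lo hi (Rlt_le _ _ Hxy)
    (fun z Hz => proj1 (HF z Hz)) Hm Hlo Hhi) as [u [Hu Eu]].
  exists u. split; [exact Hu|]. rewrite <- Eu at 2. now apply HF.
Qed.

Lemma cos_ge_on_arc (j : Z) (x : R) : Rabs (x - center j) <= alpha v -> v <= cos (x - center j).
Proof.
  intros Hx. rewrite <- (cos_alpha v Hv1).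
  replace (cos (x - center j)) with (cos (Rabs (x - center j)))
    by (unfold Rabs; destruct Rcase_abs; [apply cos_neg|reflexivity]).
  generalize (alpha_bounds v Hv1) (Rabs_pos (x - center j)) PI_RGT_0. intros Ha H0 HPI.
  destruct (Req_dec (Rabs (x - center j)) (alpha v)) as [E|]; [rewrite E; lra|].
  left. apply cos_decreasing_1; lra.
Qed.

Lemma branch_continuous (j : Z) (x : R) : Rabs (x - center j) < PI -> continuity_pt (branch j) x.
Proof.
  intros Hx. apply Rabs_lt_between' in Hx.
  unfold branch. apply continuity_pt_plus; [|apply continuity_pt_const; now intros ? ?].
  apply (continuity_pt_comp (fun w => w - center j)).
  - apply continuity_pt_minus; [apply continuity_pt_id|apply continuity_pt_const; now intros ? ?].
  - apply K1_continuous. lra.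
Qed.

Lemma kbranch_arc (j : Z) (lo hi : R) :
  center j - alpha v <= lo -> lo < hi -> hi <= center j + alpha v ->
  kbranch 1 lo hi (branch j hi) (branch j lo) (branch j).
Proof.
  intros Hlo Hlh Hhi. generalize (alpha_bounds v Hv1) PI_RGT_0. intros Ha HPI.
  assert (Hdec : forall z1 z2, lo <= z1 -> z1 < z2 -> z2 <= hi -> branch j z2 < branch j z1).
  { intros z1 z2 H1 H12 H2. unfold branch.
    assert (K1 v (z2 - center j) < K1 v (z1 - center j)) by (apply K1_decreasing; lra). lra. }
  split; [|split; [|split]].
  - exact Hlh.
  - apply Hdec; lra.
  - right. repeat split. intros z1 z2 H1 H12 H2.
    destruct (Req_dec z1 z2) as [->|]; [lra|]. left. apply Hdec; lra.
  - intros z Hz. split.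
    + apply branch_continuous, Rabs_lt_between'. lra.
    + apply reach_branch, cos_ge_on_arc, Rabs_le_between'. lra.
Qed.

Lemma alpha_gt_PI3 : PI / 3 < alpha v.
Proof.
  generalize (alpha_bounds v Hv1) (cos_alpha v Hv1) PI_RGT_0. intros Ha Hc HPI.
  destruct (Rle_lt_dec (alpha v) (PI / 3)) as [Hle|]; [|assumption].
  destruct (Req_dec (alpha v) (PI / 3)) as [E|]; [rewrite E, cos_PI3 in Hc; lra|].
  assert (cos (PI / 3) < cos (alpha v)) by (apply cos_decreasing_1; lra).
  rewrite cos_PI3 in *. lra.
Qed.

(* The overlap of the arcs about [center j] and [center (j + 1)]. *)
Definition overlap_lo (j : Z) : R := center j + 2 * PI / 3 - alpha v.
Definition overlap_hi (j : Z) : R := center j + alpha v.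

Definition covers_overlap (lo hi : R) : Prop :=
  exists j, lo <= overlap_lo j /\ overlap_hi j <= hi.

Lemma nearest_center (x : R) : exists j, - (PI / 3) <= x - center j < PI / 3.
Proof.
  destruct (Int_part_interval (x + PI / 3) (2 * PI / 3)) as [k Hk]; [generalize PI_RGT_0; lra|].
  exists k. unfold center. replace (2 * PI * IZR k / 3) with (IZR k * (2 * PI / 3)) by field. lra.
Qed.

Lemma interval_fits_or_covers_overlap (c lo hi : R) : PI / 3 < c < alpha v -> lo < hi ->
  covers_overlap lo hi \/
  exists j u w, center j - alpha v <= lo /\ lo <= u /\ u <= w /\ w <= hi /\
    hi <= center j + alpha v /\ center j - c <= u /\ w <= center j + c /\
    Rmin (hi - lo) (c - PI / 3) <= w - u.
Proof.
  intros Hc Hlh. generalize (alpha_bounds v Hv1) PI_RGT_0. intros Ha HPI.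
  assert (Hm1 := Rmin_l (hi - lo) (c - PI / 3)). assert (Hm2 := Rmin_r (hi - lo) (c - PI / 3)).
  destruct (nearest_center lo) as [j Hj].
  destruct (Rle_lt_dec (hi - center j) c) as [Hhi|Hhi].
  { right. exists j, lo, hi. repeat split; lra. }
  destruct (Rle_lt_dec (lo - center j) (2 * PI / 3 - alpha v)) as [Hlo|Hlo].
  - destruct (Rle_lt_dec (alpha v) (hi - center j)) as [Hhi'|Hhi'].
    + left. exists j. unfold overlap_lo, overlap_hi. lra.
    + right. exists j, lo, (center j + c). repeat split; lra.
  - destruct (Rle_lt_dec (2 * PI / 3 + alpha v) (hi - center j)) as [Hhi'|Hhi'].
    + left. exists (j + 1)%Z. unfold overlap_lo, overlap_hi. rewrite center_succ. lra.
    + right. exists (j + 1)%Z, (Rmax lo (center j + 2 * PI / 3 - c)), (center j + c).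
      rewrite center_succ. unfold Rmax. destruct (Rle_dec lo (center j + 2 * PI / 3 - c));
        repeat split; lra.
Qed.

Lemma growth_factor (lam g L P : R) : 1 <= lam -> 0 < g -> 0 <= L <= P ->
  Rmin lam (1 + (lam - 1) * g / P) * L <= L + (lam - 1) * Rmin L g.
Proof.
  intros Hlam Hg HL. set (mu := Rmin lam (1 + (lam - 1) * g / P)).
  destruct (Rle_dec L g) as [HLg|HLg].
  - rewrite (Rmin_left L g HLg).
    assert (mu * L <= lam * L) by (apply Rmult_le_compat_r; [lra|apply Rmin_l]). lra.
  - rewrite Rmin_right by lra.
    assert (mu * L <= (1 + (lam - 1) * g / P) * L) by (apply Rmult_le_compat_r; [lra|apply Rmin_r]).
    assert ((lam - 1) * g / P * L <= (lam - 1) * g).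
    { replace ((lam - 1) * g / P * L) with ((lam - 1) * g * (L / P)) by (field; lra).
      rewrite <- (Rmult_1_r ((lam - 1) * g)) at 2. apply Rmult_le_compat_l; [nra|].
      apply (Rmult_le_reg_r P); [lra|]. field_simplify; lra. }
    lra.
Qed.

Lemma kbranch_expands_or_covers : exists mu, 1 < mu /\
  forall n x y lo hi F, kbranch n x y lo hi F -> covers_overlap lo hi \/
    (hi - lo <= 2 * alpha v /\
     exists lo' hi' G, kbranch (S n) x y lo' hi' G /\ mu * (hi - lo) <= hi' - lo').
Proof.
  generalize alpha_gt_PI3 (alpha_bounds v Hv1) PI_RGT_0. intros Ha3 Ha HPI.
  set (c := (PI / 3 + alpha v) / 2).
  destruct (K1_uniformly_expanding v Hv1 c) as [lam [Hlam Hexp]]; [unfold c; lra|].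
  exists (Rmin lam (1 + (lam - 1) * (c - PI / 3) / (2 * PI))). split.
  { apply Rmin_glb_lt; [lra|].
    assert (0 < (lam - 1) * (c - PI / 3) / (2 * PI)); [|lra].
    apply Rdiv_lt_0_compat; [apply Rmult_lt_0_compat; unfold c; lra|lra]. }
  intros n x y lo hi F HF.
  assert (Hlh : lo < hi) by (destruct HF as [_ [? _]]; assumption).
  destruct (interval_fits_or_covers_overlap c lo hi) as [Hcov|[j [u [w Hfit]]]];
    [unfold c; lra|exact Hlh|left; exact Hcov|right].
  destruct Hfit as [H1 [H2 [H3 [H4 [H5 [H6 [H7 H8]]]]]]].
  split; [lra|]. exists (branch j hi), (branch j lo), (fun z => branch j (F z)). split.
  - replace (S n) with (n + 1)%nat by lia.
    apply kbranch_comp with lo hi; [exact HF|apply kbranch_arc; lra].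
  - assert (Hgain : (hi - lo) + (lam - 1) * (w - u) <= branch j lo - branch j hi).
    { unfold branch.
      assert (hi - center j - (lo - center j) + (lam - 1) * (w - center j - (u - center j)) <=
              K1 v (lo - center j) - K1 v (hi - center j))
        by (apply (K1_gain v Hv1 c lam); try lra; exact Hexp).
      lra. }
    assert (Hf := growth_factor lam (c - PI / 3) (hi - lo) (2 * PI)).
    assert ((lam - 1) * Rmin (hi - lo) (c - PI / 3) <= (lam - 1) * (w - u))
      by (apply Rmult_le_compat_l; lra).
    unfold c in *. lra.
Qed.

Lemma kbranch_eventually_covers (n : nat) (x y lo hi : R) (F : R -> R) :
  kbranch n x y lo hi F ->
  exists n' lo' hi' G, (n <= n')%nat /\ kbranch n' x y lo' hi' G /\ covers_overlap lo' hi'.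
Proof.
  intros HF. destruct kbranch_expands_or_covers as [mu [Hmu Hstep]].
  generalize (alpha_bounds v Hv1) PI_RGT_0. intros Ha HPI.
  (* each step either covers an overlap or multiplies the length by mu, but lengths stay below 2 PI *)
  assert (Hind : forall N n0 lo0 hi0 F0, kbranch n0 x y lo0 hi0 F0 -> 2 * PI <= (hi0 - lo0) * mu ^ N ->
    exists n' lo' hi' G, (n0 <= n')%nat /\ kbranch n' x y lo' hi' G /\ covers_overlap lo' hi').
  { induction N as [|N IH]; intros n0 lo0 hi0 F0 HF0 Hlen;
      (destruct (Hstep _ _ _ _ _ _ HF0) as [Hc|[Hl [lo1 [hi1 [F1 [HF1 Hgrow]]]]]];
       [exists n0, lo0, hi0, F0; auto|]).
    - simpl in Hlen. lra.
    - destruct (IH (S n0) lo1 hi1 F1 HF1) as [n' [lo' [hi' [G [Hn [HG Hc]]]]]].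
      + simpl in Hlen. assert (0 < mu ^ N) by (apply pow_lt; lra). nra.
      + exists n', lo', hi', G. split; [lia|auto]. }
  assert (Hlh : lo < hi) by (destruct HF as [_ [? _]]; assumption).
  destruct (Pow_x_infinity mu ltac:(rewrite Rabs_right; lra) (2 * PI / (hi - lo))) as [N HN].
  apply (Hind N n lo hi F HF). specialize (HN N (Nat.le_refl N)).
  rewrite Rabs_right in HN by (apply Rle_ge, pow_le; lra).
  apply Rge_le, (Rmult_le_compat_l (hi - lo)) in HN; [|lra].
  replace ((hi - lo) * (2 * PI / (hi - lo))) with (2 * PI) in HN by (field; lra). lra.
Qed.

Lemma short_interval_reaches_overlap (x y : R) : x < y -> y - x < 2 * alpha v - 2 * PI / 3 ->
  exists n j x' y' G, (1 <= n)%nat /\ x <= x' /\ y' <= y /\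
    kbranch n x' y' (overlap_lo j) (overlap_hi j) G.
Proof.
  intros Hxy Hshort. generalize alpha_gt_PI3. intros Ha3.
  destruct kbranch_expands_or_covers as [mu [_ Hstep]].
  destruct (Hstep 0%nat x y x y (fun z => z) (kbranch_id x y Hxy))
    as [[j [Hlo Hhi]]|[_ [lo [hi [F [HF _]]]]]].
  { unfold overlap_lo, overlap_hi in *. lra. }
  destruct (kbranch_eventually_covers 1 x y lo hi F HF) as [n [lo' [hi' [G [Hn [HG [j [Hlo Hhi]]]]]]]].
  destruct (kbranch_restrict n x y lo' hi' (overlap_lo j) (overlap_hi j) G HG)
    as [x' [y' [Hx' [Hy' HG']]]]; [exact Hlo|unfold overlap_lo, overlap_hi; lra|exact Hhi|].
  exists n, j, x', y', G. auto.
Qed.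

Definition overlap_covers (j : Z) (lo hi : R) : Prop :=
  exists n x y F, overlap_lo j <= x /\ y <= overlap_hi j /\ kbranch n x y lo hi F.

Lemma overlap_covers_restrict (j : Z) (lo hi c d : R) :
  overlap_covers j lo hi -> lo <= c -> c < d -> d <= hi -> overlap_covers j c d.
Proof.
  intros [n [x [y [F [Hx [Hy HF]]]]]] Hc Hcd Hd.
  destruct (kbranch_restrict n x y lo hi c d F HF Hc Hcd Hd) as [x' [y' [Hx' [Hy' HF']]]].
  exists n, x', y', F. split; [lra|split; [lra|exact HF']].
Qed.

Definition covered_near (j : Z) (y : R) : Prop :=
  forall eps, 0 < eps -> exists c d,
    c < d /\ Rabs (c - y) < eps /\ Rabs (d - y) < eps /\ overlap_covers j c d.

Lemma covered_near_overlap (j : Z) (y : R) : overlap_lo j <= y <= overlap_hi j -> covered_near j y.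
Proof.
  intros Hy eps Heps. generalize alpha_gt_PI3. intros Ha3.
  assert (Hj : overlap_lo j < overlap_hi j) by (unfold overlap_lo, overlap_hi; lra).
  set (c := Rmax (y - eps / 2) (overlap_lo j)). set (d := Rmin (y + eps / 2) (overlap_hi j)).
  assert (Hc : y - eps / 2 <= c <= y) by (split; [apply Rmax_l|apply Rmax_lub; lra]).
  assert (Hd : y <= d <= y + eps / 2) by (split; [apply Rmin_glb; lra|apply Rmin_l]).
  assert (Hcd : c < d) by (apply Rmax_lub_lt; apply Rmin_glb_lt; lra).
  exists c, d. split; [exact Hcd|]. split; [apply Rabs_lt_between'; lra|].
  split; [apply Rabs_lt_between'; lra|].
  exists 0%nat, c, d, (fun z => z). split; [apply Rmax_r|split; [apply Rmin_r|now apply kbranch_id]].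
Qed.

Lemma covered_near_period (j : Z) (y : R) (m : Z) :
  covered_near j y -> covered_near j (y + 2 * PI * IZR m).
Proof.
  intros Hy eps Heps.
  destruct (Hy eps Heps) as [c [d [Hcd [Hc [Hd [n [x [z [F [Hx [Hz HF]]]]]]]]]]].
  exists (c + 2 * PI * IZR m), (d + 2 * PI * IZR m). split; [lra|].
  replace (c + 2 * PI * IZR m - (y + 2 * PI * IZR m)) with (c - y) by ring.
  replace (d + 2 * PI * IZR m - (y + 2 * PI * IZR m)) with (d - y) by ring.
  split; [exact Hc|split; [exact Hd|]].
  exists n, x, z, (fun w => F w + 2 * PI * IZR m). split; [exact Hx|split; [exact Hz|]].
  now apply kbranch_period.
Qed.

Lemma covered_near_branch (j i : Z) (X : R) :
  Rabs (X - center i) < alpha v -> covered_near j X -> covered_near j (branch i X).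
Proof.
  intros HX HXc eps Heps. generalize (alpha_bounds v Hv1) PI_RGT_0. intros Ha HPI.
  destruct (continuity_pt_ball (branch i) X eps) as [eta [Heta Hball]]; [|exact Heps|].
  { apply branch_continuous. lra. }
  assert (Hd1 := Rmin_l eta (alpha v - Rabs (X - center i))).
  assert (Hd2 := Rmin_r eta (alpha v - Rabs (X - center i))).
  set (delta := Rmin eta (alpha v - Rabs (X - center i))) in *.
  assert (Hdelta : 0 < delta) by (apply Rmin_glb_lt; lra).
  destruct (HXc delta Hdelta) as [c [d [Hcd [Hc [Hd [n [x [y [F [Hx [Hy HF]]]]]]]]]]].
  assert (HXb := proj1 (Rabs_le_between' X (center i) _) (Rle_refl (Rabs (X - center i)))).
  assert (Harc : center i - alpha v <= c /\ d <= center i + alpha v).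
  { apply Rabs_lt_between' in Hc, Hd. lra. }
  assert (HB := kbranch_arc i c d (proj1 Harc) Hcd (proj2 Harc)).
  exists (branch i d), (branch i c). split; [apply HB|].
  split; [apply Hball; lra|split; [apply Hball; lra|]].
  exists (n + 1)%nat, x, y, (fun z => branch i (F z)). split; [exact Hx|split; [exact Hy|]].
  now apply kbranch_comp with c d.
Qed.

Definition covered_around (j : Z) (t : R) : Prop :=
  forall y, center j + PI / 3 - t <= y <= center j + PI / 3 + t -> covered_near j y.

Lemma covered_around_overlap (j : Z) : covered_around j (alpha v - PI / 3).
Proof. intros y Hy. apply covered_near_overlap. unfold overlap_lo, overlap_hi. lra. Qed.

Lemma covered_around_grow (j : Z) (t : R) : alpha v - PI / 3 <= t -> - alpha v < PI / 3 - t ->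
  covered_around j t -> covered_around j (K1 v (PI / 3 - t) - PI / 3).
Proof.
  intros Ht1 Ht2 Hcov y Hy.
  generalize (alpha_bounds v Hv1) alpha_gt_PI3 PI_RGT_0 (K1_alpha v Hv1) (K1_opp_alpha v Hv1).
  intros Ha Ha3 HPI Ka Kma.
  assert (Hcont : forall z, - alpha v <= z <= alpha v -> continuity_pt (K1 v) z)
    by (intros; apply K1_continuous; lra).
  destruct (Rle_dec y (center j + PI / 3 + t)) as [Y1|Y1].
  - destruct (Rle_dec (center j + PI / 3 - t) y) as [Y2|Y2]; [now apply Hcov|].
    (* left of the window, y is an image under the neighbouring branch j + 1 *)
    assert (Kn : K1 v (t - PI / 3) = 2 * PI - K1 v (PI / 3 - t))
      by (rewrite <- K1_opp; f_equal; ring).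
    destruct (IVT_between (K1 v) (- alpha v) (t - PI / 3) (y - center j + 4 * PI / 3))
      as [u [Hu Eu]]; [lra|intros; apply Hcont; lra|lra|].
    assert (Hu' : u <> - alpha v) by (intros E; rewrite E in Eu; lra).
    assert (HX : covered_near j (branch (j + 1) (center (j + 1) + u))).
    { apply covered_near_branch.
      - replace (center (j + 1) + u - center (j + 1)) with u by ring. apply Rabs_lt_between. lra.
      - apply Hcov. rewrite center_succ. lra. }
    replace y with (branch (j + 1) (center (j + 1) + u) + 2 * PI * IZR (-1))
      by (unfold branch; rewrite center_succ;
          replace (center j + 2 * PI / 3 + u - (center j + 2 * PI / 3)) with u by ring; simpl; lra).
    now apply covered_near_period.
  - destruct (IVT_between (K1 v) (PI / 3 - t) (alpha v) (y - center j))
      as [u [Hu Eu]]; [lra|intros; apply Hcont; lra|lra|].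
    assert (Hu' : u <> alpha v) by (intros E; rewrite E in Eu; lra).
    replace y with (branch j (center j + u))
      by (unfold branch; replace (center j + u - center j) with u by ring; lra).
    apply covered_near_branch.
    + replace (center j + u - center j) with u by ring. apply Rabs_lt_between. lra.
    + apply Hcov. lra.
Qed.

Lemma covered_around_everywhere (j : Z) (t : R) : alpha v - PI / 3 <= t -> PI / 3 - t <= - alpha v ->
  covered_around j t -> forall y, covered_near j y.
Proof.
  intros Ht1 Ht2 Hcov y.
  generalize (alpha_bounds v Hv1) alpha_gt_PI3 PI_RGT_0 (K1_alpha v Hv1) (K1_opp_alpha v Hv1).
  intros Ha Ha3 HPI Ka Kma.
  destruct (Int_part_interval (y - center j + alpha v) (2 * PI)) as [m Hm]; [lra|].
  replace y with (y - 2 * PI * IZR m + 2 * PI * IZR m) by ring. apply covered_near_period.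
  set (y0 := y - 2 * PI * IZR m).
  assert (Hy0 : center j - alpha v <= y0 < center j - alpha v + 2 * PI) by (unfold y0; lra).
  destruct (Rle_dec y0 (center j + alpha v)) as [Hle|Hgt]; [apply Hcov; lra|].
  destruct (IVT_between (K1 v) (- alpha v) (alpha v) (y0 - center j)) as [u [Hu Eu]];
    [lra|intros; apply K1_continuous; lra|lra|].
  assert (Hu' : u <> alpha v /\ u <> - alpha v) by (split; intros E; rewrite E in Eu; lra).
  replace y0 with (branch j (center j + u))
    by (unfold branch; replace (center j + u - center j) with u by ring; lra).
  apply covered_near_branch.
  - replace (center j + u - center j) with u by ring. apply Rabs_lt_between. lra.
  - apply Hcov. lra.
Qed.

Lemma covered_near_everywhere (j : Z) (y : R) : covered_near j y.
Proof.
  generalize (alpha_bounds v Hv1) alpha_gt_PI3 PI_RGT_0 (K1_alpha v Hv1). intros Ha Ha3 HPI Ka.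
  set (d0 := K1 v (PI / 3) - PI / 3).
  assert (HK : K1 v (alpha v) < K1 v (PI / 3)) by (apply K1_decreasing; lra).
  assert (Hd0 : 0 < d0) by (unfold d0; lra).
  (* by expansion, each application of covered_around_grow widens the window by at least d0 *)
  assert (Hind : forall (N : nat) t, alpha v - PI / 3 <= t -> PI / 3 + alpha v <= t + INR N * d0 ->
                 covered_around j t -> covered_near j y).
  { induction N as [|N IH]; intros t Ht1 Ht2 Hcov.
    - apply (covered_around_everywhere j t); [lra|simpl in Ht2; lra|exact Hcov].
    - destruct (Rle_dec (PI / 3 - t) (- alpha v)) as [Hfin|Hfin].
      { now apply (covered_around_everywhere j t). }
      assert (t <= K1 v (PI / 3 - t) - K1 v (PI / 3)).
      { replace t with (PI / 3 - (PI / 3 - t)) at 1 by ring. apply K1_expanding; lra. }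
      apply (IH (K1 v (PI / 3 - t) - PI / 3)); [lra|rewrite S_INR in Ht2; unfold d0 in *; lra|].
      apply covered_around_grow; [lra|lra|exact Hcov]. }
  destruct (INR_archimed d0 (2 * PI / 3) Hd0) as [N HN].
  apply (Hind N (alpha v - PI / 3)); [lra|lra|apply covered_around_overlap].
Qed.

Lemma overlap_covers_dense (j : Z) (c d : R) : c < d ->
  exists c' d', c <= c' /\ c' < d' /\ d' <= d /\ overlap_covers j c' d'.
Proof.
  intros Hcd.
  destruct (covered_near_everywhere j ((c + d) / 2) ((d - c) / 2)) as [c' [d' [H1 [H2 [H3 H4]]]]];
    [lra|].
  apply Rabs_lt_between' in H2, H3. exists c', d'. split; [lra|split; [lra|split; [lra|exact H4]]].
Qed.

Lemma overlap_covers_dense_residues (c d : R) : c < d -> exists c' d',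
  c <= c' /\ c' < d' /\ d' <= d /\ forall r, (r = 0 \/ r = 1 \/ r = 2)%Z -> overlap_covers r c' d'.
Proof.
  intros Hcd.
  destruct (overlap_covers_dense 0 c d Hcd) as [c0 [d0 [Hc0 [Hcd0 [Hd0 Hcov0]]]]].
  destruct (overlap_covers_dense 1 c0 d0 Hcd0) as [c1 [d1 [Hc1 [Hcd1 [Hd1 Hcov1]]]]].
  destruct (overlap_covers_dense 2 c1 d1 Hcd1) as [c2 [d2 [Hc2 [Hcd2 [Hd2 Hcov2]]]]].
  exists c2, d2. split; [lra|split; [lra|split; [lra|]]].
  intros r [Hr|[Hr|Hr]]; subst r; eapply overlap_covers_restrict; eauto; lra.
Qed.

Lemma kbranch_point (n : nat) (x y lo hi z : R) (F : R -> R) :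
  kbranch n x y lo hi F -> x <= z <= y -> lo <= F z <= hi /\ reach n z (F z).
Proof.
  intros [_ [_ [Hm HF]]] Hz. split; [now apply (monotone_onto_range F x y)|now apply HF].
Qed.

Lemma kasner_sensitive : sensitive v.
Proof.
  generalize alpha_gt_PI3 (alpha_bounds v Hv1) PI_RGT_0. intros Ha3 Ha HPI.
  set (W := 2 * alpha v - 2 * PI / 3).
  exists (dK 0 W / 2). split.
  { apply Rdiv_lt_0_compat; [apply dK_pos; rewrite Rabs_left; unfold W; lra|lra]. }
  intros p eps Heps.
  assert (Hl1 := Rmin_l eps W). assert (Hl2 := Rmin_r eps W).
  set (l := Rmin eps W / 2).
  assert (Hl : 0 < l) by (apply Rdiv_lt_0_compat; [apply Rmin_glb_lt; unfold W; lra|lra]).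
  destruct (short_interval_reaches_overlap (p + l / 2) (p + l)) as [n [j [x [y [G [Hn [Hx [Hy HG]]]]]]]];
    [lra|unfold l, W in *; lra|].
  assert (Hj : overlap_lo j < overlap_hi j) by (unfold overlap_lo, overlap_hi; lra).
  destruct (kbranch_surj _ _ _ _ _ (overlap_lo j) G HG) as [u1 [Hu1 E1]]; [lra|].
  destruct (kbranch_surj _ _ _ _ _ (overlap_hi j) G HG) as [u2 [Hu2 E2]]; [lra|].
  set (P := Kiter v (fun _ => (true, true, true)) n p).
  (* the two ends of the overlap are W apart, so one of them is far from P *)
  assert (Hfar : exists u, x <= u <= y /\ dK 0 W / 2 <= dK P (G u)).
  { assert (Hd : dK (overlap_lo j) (overlap_hi j) = dK 0 W).
    { rewrite !dK_cos. now replace (overlap_lo j - overlap_hi j) with (0 - W)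
        by (unfold overlap_lo, overlap_hi, W; ring). }
    assert (Ht := dK_triangle (overlap_lo j) P (overlap_hi j)).
    rewrite (dK_sym (overlap_lo j) P), Hd in Ht.
    destruct (Rle_lt_dec (dK 0 W / 2) (dK P (overlap_lo j))).
    - exists u1. rewrite E1. auto.
    - exists u2. rewrite E2. split; [exact Hu2|lra]. }
  destruct Hfar as [u [Hu Hfar]].
  destruct (proj2 (kbranch_point _ _ _ _ _ u G HG Hu)) as [omega [k Hk]].
  exists u, n, (fun _ => (true, true, true)), omega. split; [|split].
  - eapply Rle_lt_trans; [apply dK_le_abs|]. rewrite Rabs_right; unfold l in *; lra.
  - apply dK_pos. rewrite Rabs_right; unfold l, W in *; lra.
  - fold P. rewrite Hk, dK_period_r. exact Hfar.
Qed.

Lemma kasner_transitive : top_transitive v.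
Proof.
  intros p1 p2 eps1 eps2 He1 He2.
  generalize alpha_gt_PI3 PI_RGT_0. intros Ha3 HPI.
  assert (Hl1 := Rmin_l eps1 (2 * alpha v - 2 * PI / 3)).
  assert (Hl2 := Rmin_r eps1 (2 * alpha v - 2 * PI / 3)).
  set (l := Rmin eps1 (2 * alpha v - 2 * PI / 3) / 2) in *.
  assert (Hl : 0 < l) by (apply Rdiv_lt_0_compat; [apply Rmin_glb_lt; lra|lra]).
  destruct (short_interval_reaches_overlap p1 (p1 + l)) as [n [j [x [y [G [Hn [Hx [Hy HG]]]]]]]];
    [lra|unfold l in *; lra|].
  destruct (overlap_covers_dense j (p2 - eps2 / 2) (p2 + eps2 / 2))
    as [c [d [Hc [Hcd [Hd [m [z1 [z2 [H [Hz1 [Hz2 HH]]]]]]]]]]]; [lra|].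
  assert (Hz12 : z1 < z2) by (destruct HH; lra).
  destruct (kbranch_surj _ _ _ _ _ z1 G HG) as [u [Hu Eu]]; [lra|].
  destruct (kbranch_point _ _ _ _ _ z1 H HH) as [HHz1 Hreach2]; [lra|].
  assert (Hreach1 := proj2 (kbranch_point _ _ _ _ _ u G HG Hu)). rewrite Eu in Hreach1.
  destruct (reach_trans _ _ _ _ _ Hreach1 Hreach2) as [omega [k Hk]].
  exists (n + m)%nat, omega, u. split; [lia|split].
  - eapply Rle_lt_trans; [apply dK_le_abs|]. rewrite Rabs_right; unfold l in *; lra.
  - rewrite Hk, dK_period_l. eapply Rle_lt_trans; [apply dK_le_abs|].
    apply Rabs_lt_between'. lra.
Qed.

Lemma kasner_dense_periodic : dense_periodic v.
Proof.
  intros p eps Heps.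
  generalize alpha_gt_PI3 PI_RGT_0. intros Ha3 HPI.
  assert (Hl1 := Rmin_l eps (2 * alpha v - 2 * PI / 3)).
  assert (Hl2 := Rmin_r eps (2 * alpha v - 2 * PI / 3)).
  set (l := Rmin eps (2 * alpha v - 2 * PI / 3) / 2) in *.
  assert (Hl : 0 < l) by (apply Rdiv_lt_0_compat; [apply Rmin_glb_lt; lra|lra]).
  destruct (overlap_covers_dense_residues (p - l / 2) (p + l / 2))
    as [c [d [Hc [Hcd [Hd Hall]]]]]; [lra|].
  destruct (short_interval_reaches_overlap c d) as [n [j [x [y [G [Hn [Hx [Hy HG]]]]]]]];
    [lra|unfold l in *; lra|].
  destruct (center_mod3 j) as [r [q [Hr Ej]]].
  destruct (Hall r Hr) as [m [z1 [z2 [F [Hz1 [Hz2 HH]]]]]].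
  assert (HG' := kbranch_period n x y _ _ G (- q) HG).
  replace (overlap_lo j + 2 * PI * IZR (- q)) with (overlap_lo r) in HG'
    by (unfold overlap_lo; rewrite Ej, opp_IZR; ring).
  replace (overlap_hi j + 2 * PI * IZR (- q)) with (overlap_hi r) in HG'
    by (unfold overlap_hi; rewrite Ej, opp_IZR; ring).
  assert (Hz12 : z1 < z2) by (destruct HH; lra).
  destruct (kbranch_restrict _ _ _ _ _ z1 z2 _ HG') as [x' [y' [Hx' [Hy' HG'']]]]; try lra.
  destruct (kbranch_fixed_point _ _ _ _ _ _ (kbranch_comp _ _ _ _ _ _ _ _ _ _ HG'' HH))
    as [u [Hu [omega [k Hk]]]]; [lra|lra|].
  exists omega, u, (n + m)%nat. split; [lia|split].
  - eapply Rle_lt_trans; [apply dK_le_abs|]. apply Rabs_lt_between'. unfold l in *. lra.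
  - rewrite Hk, dK_period_l. apply dK_refl.
Qed.

End Kasner.

Theorem theorem1 : forall v : R, 0 < v < 1 / 2 -> realizes_chaos v.
Proof.
  intros v Hv. split; [|split].
  - now apply kasner_sensitive.
  - now apply kasner_transitive.
  - now apply kasner_dense_periodic.
Qed.
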